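(* Let $q_1,q_2\in\mathbb{Z}$, $X$ a nonempty finite set and $f\in\mathrm{Bool}(X)$. There exists an ordered sequence $(X_1,\ldots,X_k)$ of nonempty pairwise disjoint subsets of $X$ with union $X$ such that each $f_{\mid X_i}$ is $(q_1,q_2)$-indecomposable and $f=f_{\mid X_1}\star_{q_1,q_2}\cdots\star_{q_1,q_2}f_{\mid X_k}$. Moreover, if $(Y_1,\ldots,Y_l)$ is another such sequence with the same two properties, then $k=l$ and there exists a permutation $\sigma$ of $\{1,\ldots,k\}$ with $Y_i=X_{\sigma(i)}$ for all $i$.
   Context: For a finite set $X$, a boolean function on $X$ is a map $f:\mathcal{P}(X)\to\mathbb{Z}$ with $f(\emptyset)=0$; $\mathrm{Bool}(X)$ is the set of these. Throughout, $0^0=1$. For disjoint finite sets $X,Y$, $f\in\mathrm{Bool}(X)$, $g\in\mathrm{Bool}(Y)$, $(f\star_{q_1,q_2}g)(A)=q_1^{|A\cap Y|}f(A\cap X)+q_2^{|A\cap X|}g(A\cap Y)$ for $A\subseteq X\sqcup Y$; this product is associative. For $Y\subseteq X$, $f_{\mid Y}\in\mathrm{Bool}(Y)$ denotes the restriction of $f$ to $\mathcal{P}(Y)$. For $X$ nonempty, $f\in\mathrm{Bool}(X)$ is $(q_1,q_2)$-indecomposable if whenever $Y\subseteq X$, $f'\in\mathrm{Bool}(X\setminus Y)$, $f''\in\mathrm{Bool}(Y)$ and $f=f'\star_{q_1,q_2}f''$, then $Y=\emptyset$ or $Y=X$. *)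

(* The finite set X of the paper is the finType T itself;
   subsets of X are {set T}; a boolean function on X is f : {set T} -> int
   with f set0 = 0. A boolean function on a subset Y of T is represented by a
   function g : {set T} -> int with g set0 = 0, of which only the values on
   subsets of Y matter. *)
From HB Require Import structures.
From mathcomp Require Import all_boot all_order all_algebra all_fingroup.
Set Implicit Arguments. Unset Strict Implicit. Unset Printing Implicit Defensive.
Import Order.TTheory GRing.Theory Num.Theory.
Local Open Scope ring_scope.

Section BoolFun.
Variable T : finType.
Variables q1 q2 : int.

Definition star (X Y : {set T}) (f g : {set T} -> int) : {set T} -> int :=
  fun A => q1 ^+ #|A :&: Y| * f (A :&: X) + q2 ^+ #|A :&: X| * g (A :&: Y).

Definition eq_on (X : {set T}) (f g : {set T} -> int) : Prop :=
  forall A : {set T}, A \subset X -> f A = g A.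

Definition indecomposable (X : {set T}) (f : {set T} -> int) : Prop :=
  X != set0 /\
  forall (Y : {set T}) (f' f'' : {set T} -> int),
    Y \subset X -> f' set0 = 0 -> f'' set0 = 0 ->
    eq_on X f (star (X :\: Y) Y f' f'') ->
    Y = set0 \/ Y = X.

(* f_{|X_1} * f_{|X_2} * ... * f_{|X_k} (right-associated; the product is
   associative), as a boolean function on X_1 ∪ ... ∪ X_k *)
Fixpoint bigstar (f : {set T} -> int) (s : seq {set T}) : {set T} -> int :=
  match s with
  | [::] => fun _ => 0
  | Y :: s' => star Y (\bigcup_(Z <- s') Z) f (bigstar f s')
  end.

Definition good_decomp (f : {set T} -> int) (s : seq {set T}) : Prop :=
  [/\ forall i, (i < size s)%N -> nth set0 s i != set0,
      forall i j, (i < size s)%N -> (j < size s)%N -> i != j ->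
        [disjoint nth set0 s i & nth set0 s j],
      \bigcup_(Z <- s) Z = [set: T],
      forall i, (i < size s)%N -> indecomposable (nth set0 s i) f
    & eq_on [set: T] f (bigstar f s)].

End BoolFun.

From HB Require Import structures.
From mathcomp Require Import all_boot all_order all_algebra all_fingroup.
From Stdlib Require Import Classical.
From mathcomp Require Import ring zify.
(* Existence is by induction on #|U|: either f is indecomposable on U, or it is
   the star product of its restrictions to a partition {X, Y} of U, and the
   decompositions of X and Y concatenate, the star product being associative
   on disjoint supports.
   Uniqueness rests on one observation: if f splits along a partition (Y, U')
   of U, then an indecomposable X contained in U splits along (X :&: Y,
   X :&: U'), hence lies in Y or in U'.  So every block of one decomposition
   lies in a block of the other; blocks of one decomposition being nonempty
   and disjoint, both sequences have the same blocks, and being duplicate-free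
   they are permutations of each other. *)

Set Implicit Arguments. Unset Strict Implicit. Unset Printing Implicit Defensive.
Import Order.TTheory GRing.Theory Num.Theory.
Local Open Scope ring_scope.

Section StarProduct.
Variables (T : finType) (q1 q2 : int).
Implicit Types (A W X Y Z : {set T}) (s t : seq {set T}) (f g h : {set T} -> int).

Local Notation union s := (\bigcup_(Z <- s) Z).
Local Notation disjoint_seq s := (pairwise (fun A B : {set T} => [disjoint A & B]) s).

Lemma cardsIU_disjoint A X Y :
  [disjoint X & Y] -> #|A :&: (X :|: Y)| = (#|A :&: X| + #|A :&: Y|)%N.
Proof.
move=> dXY; have dAXY : [disjoint A :&: X & A :&: Y].
  exact: disjointW (subsetIr _ _) (subsetIr _ _) dXY.
by rewrite setIUr cardsU (disjoint_setI0 dAXY) cards0 subn0.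
Qed.

Lemma star_setIUr X Y f g A :
  star q1 q2 X Y f g (A :&: (X :|: Y)) = star q1 q2 X Y f g A.
Proof.
by rewrite /star -!setIA (setIidPr (subsetUl X Y)) (setIidPr (subsetUr X Y)).
Qed.

Lemma star_setI W X Y f g A : A \subset W ->
  star q1 q2 (W :&: X) (W :&: Y) f g A = star q1 q2 X Y f g A.
Proof. by move=> sAW; rewrite /star !setIA (setIidPl sAW). Qed.

Lemma eq_on_star X Y f f' g g' : eq_on X f f' -> eq_on Y g g' ->
  star q1 q2 X Y f g =1 star q1 q2 X Y f' g'.
Proof. by move=> eqf eqg A; rewrite /star eqf ?eqg ?subsetIr. Qed.

Lemma starA X Y Z f g h : [disjoint X & Y] -> [disjoint Y & Z] ->
  star q1 q2 X (Y :|: Z) f (star q1 q2 Y Z g h)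
  =1 star q1 q2 (X :|: Y) Z (star q1 q2 X Y f g) h.
Proof.
move=> dXY dYZ A; rewrite /star -!setIA.
rewrite (setIidPr (subsetUl X Y)) (setIidPr (subsetUr X Y)).
rewrite (setIidPr (subsetUl Y Z)) (setIidPr (subsetUr Y Z)).
rewrite !cardsIU_disjoint // !exprD; ring.
Qed.

Lemma eq_on_star_l X Y f g h : g set0 = 0 -> [disjoint X & Y] ->
  eq_on (X :|: Y) h (star q1 q2 X Y f g) -> eq_on X h f.
Proof.
move=> g0 dXY eqh A sAX; rewrite eqh ?(subset_trans sAX (subsetUl X Y)) // /star.
rewrite (setIidPl sAX) disjoint_setI0 ?(disjointWl sAX dXY) //.
by rewrite g0 cards0 mulr0 mul1r addr0.
Qed.

Lemma eq_on_star_r X Y f g h : f set0 = 0 -> [disjoint X & Y] ->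
  eq_on (X :|: Y) h (star q1 q2 X Y f g) -> eq_on Y h g.
Proof.
move=> f0 dXY eqh A sAY; rewrite eqh ?(subset_trans sAY (subsetUr X Y)) // /star.
rewrite disjoint_sym in dXY.
rewrite (setIidPl sAY) disjoint_setI0 ?(disjointWl sAY dXY) //.
by rewrite f0 cards0 mulr0 mul1r add0r.
Qed.

Lemma disjoint_union A s : [disjoint A & union s] = all (fun Z => [disjoint A & Z]) s.
Proof. by rewrite bigcup_seq; apply/bigcup_disjointP/allP. Qed.

Lemma disjoint_seq_mem s X Y :
  disjoint_seq s -> X \in s -> Y \in s -> X != Y -> [disjoint X & Y].
Proof.
elim: s => //= Z s IH /andP[/allP dZ ds]; rewrite !inE.
case/predU1P => [-> | Xs] /predU1P[-> | Ys]; rewrite ?eqxx // => neXY.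
- exact: dZ.
- by rewrite disjoint_sym; apply: dZ.
- exact: IH.
Qed.

Lemma uniq_disjoint_seq s : set0 \notin s -> disjoint_seq s -> uniq s.
Proof.
elim: s => //= Y s IH; rewrite inE negb_or => /andP[Y0 s0] /andP[/allP dY ds].
rewrite IH // andbT; apply/negP => Ys.
by move: (dY Y Ys); rewrite -setI_eq0 setIid eq_sym (negPf Y0).
Qed.

Lemma subset_union s Z : Z \in s -> Z \subset union s.
Proof. by move=> sZ; rewrite bigcup_seq; apply: (bigcup_max Z). Qed.

Lemma bigstar_setI f s A : bigstar q1 q2 f s (A :&: union s) = bigstar q1 q2 f s A.
Proof. by case: s => [|Y s] //=; rewrite big_cons star_setIUr. Qed.

Lemma bigstar_cat f s1 s2 : disjoint_seq s1 -> [disjoint union s1 & union s2] ->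
  bigstar q1 q2 f (s1 ++ s2)
  =1 star q1 q2 (union s1) (union s2) (bigstar q1 q2 f s1) (bigstar q1 q2 f s2).
Proof.
elim: s1 => [_ _ A | Y s1 IH /andP[dY ds1]] /=.
  by rewrite /star big_nil setI0 cards0 mulr0 add0r mul1r bigstar_setI.
rewrite big_cons big_cat => dU A /=.
have d1 : [disjoint union s1 & union s2] := disjointWl (subsetUr Y _) dU.
rewrite (eq_on_star (f' := f) (fun _ _ => erefl) (fun B _ => IH ds1 d1 B)).
by rewrite starA // disjoint_union.
Qed.

Section Decomposition.
Variable f : {set T} -> int.
Hypothesis f0 : f set0 = 0.

Definition star_split X Y := eq_on (X :|: Y) f (star q1 q2 X Y f f).

Definition decomposition U s :=
  [/\ set0 \notin s, disjoint_seq s, union s = U,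
      {in s, forall Z, indecomposable q1 q2 Z f} & eq_on U f (bigstar q1 q2 f s)].

Lemma star_split_setI W X Y : star_split X Y -> W \subset X :|: Y ->
  star_split (W :&: X) (W :&: Y).
Proof.
rewrite /star_split -setIUr => sp sW; rewrite (setIidPl sW) => A sAW.
by rewrite star_setI // sp // (subset_trans sAW sW).
Qed.

Lemma eq_on_star_split X Y g h : g set0 = 0 -> h set0 = 0 -> [disjoint X & Y] ->
  eq_on (X :|: Y) f (star q1 q2 X Y g h) -> star_split X Y.
Proof.
move=> g0 h0 dXY eqf A sA; rewrite eqf //; apply: eq_on_star => B sB.
- by rewrite (eq_on_star_l h0 dXY eqf).
- by rewrite (eq_on_star_r g0 dXY eqf).
Qed.

Lemma indecomposable_split U X Y : indecomposable q1 q2 U f ->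
  [disjoint X & Y] -> X :|: Y = U -> star_split X Y -> X = set0 \/ Y = set0.
Proof.
move=> [_ indecU] dXY eU sp; subst U.
have UDY : (X :|: Y) :\: Y = X by rewrite setDUl setDv setU0; apply/setDidPl.
have [|Y0|eYU] := indecU Y f f (subsetUr X Y) f0 f0; [by rewrite UDY | by right|left].
have sXY : X \subset Y by rewrite eYU subsetUl.
by rewrite -(setIidPl sXY) disjoint_setI0.
Qed.

Lemma decomposable_split U : U != set0 -> ~ indecomposable q1 q2 U f ->
  exists X Y, [/\ X != set0, Y != set0, [disjoint X & Y], X :|: Y = U & star_split X Y].
Proof.
move=> U0 decU.
have [Y [f' [f'' [sYU f'0 f''0 eqf nontriv]]]] : exists Y f' f'',
    [/\ Y \subset U, f' set0 = 0, f'' set0 = 0,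
        eq_on U f (star q1 q2 (U :\: Y) Y f' f'') & ~ (Y = set0 \/ Y = U)].
  apply: NNPP => none; apply: decU; split=> // Y f' f'' sYU f'0 f''0 eqf.
  by apply: NNPP => nontriv; apply: none; exists Y, f', f''.
have dY : [disjoint U :\: Y & Y] by rewrite disjoints_subset subsetDr.
have UDYY : U :\: Y :|: Y = U by rewrite setUC -{2}(setID U Y) (setIidPr sYU).
exists (U :\: Y), Y; split=> //.
- apply/negP; rewrite setD_eq0 => sUY; apply: nontriv; right.
  by apply/eqP; rewrite eqEsubset sYU.
- by apply/eqP => Y0; apply: nontriv; left.
- by apply: eq_on_star_split f'0 f''0 dY _; rewrite UDYY.
Qed.

Lemma decomposition_nil : decomposition set0 [::].
Proof. by split=> //= [|A]; rewrite ?big_nil // subset0 => /eqP ->. Qed.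

Lemma decomposition_single U : indecomposable q1 q2 U f -> decomposition U [:: U].
Proof.
move=> indU; have [U0 _] := indU; split=> /=.
- by rewrite inE eq_sym.
- by [].
- by rewrite big_seq1.
- by move=> Z; rewrite inE => /eqP ->.
by move=> A sAU; rewrite /star big_nil setI0 cards0 mul1r mulr0 addr0 (setIidPl sAU).
Qed.

Lemma decomposition_cat X Y s1 s2 : decomposition X s1 -> decomposition Y s2 ->
  [disjoint X & Y] -> star_split X Y -> decomposition (X :|: Y) (s1 ++ s2).
Proof.
case=> n1 d1 u1 i1 e1 [n2 d2 u2 i2 e2] dXY sp; split.
- by rewrite mem_cat negb_or n1 n2.
- rewrite pairwise_cat d1 d2 !andbT; apply/allrelP => Z1 Z2 Z1s Z2s.
  by apply: disjointW dXY; rewrite -?u1 -?u2 subset_union.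
- by rewrite big_cat u1 u2.
- by move=> Z; rewrite mem_cat => /orP[]; [apply: i1 | apply: i2].
move=> A sA; rewrite sp // bigstar_cat ?u1 ?u2 //.
exact: eq_on_star.
Qed.

Lemma decomposition_exists U : exists s, decomposition U s.
Proof.
have [n] := ubnP #|U|; elim: n U => // n IH U ltUn.
have [-> | U0] := eqVneq U set0; first by exists [::]; apply: decomposition_nil.
have [indU | decU] := classic (indecomposable q1 q2 U f).
  by exists [:: U]; apply: decomposition_single.
have [X [Y [X0 Y0 dXY eU sp]]] := decomposable_split U0 decU.
have cardU : #|U| = (#|X| + #|Y|)%N.
  by rewrite -eU cardsU disjoint_setI0 ?cards0 ?subn0.
rewrite -!card_gt0 in X0 Y0.
have [s1 dec1] := IH X (ltac:(lia)).
have [s2 dec2] := IH Y (ltac:(lia)).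
by exists (s1 ++ s2); rewrite -eU; apply: decomposition_cat.
Qed.

Lemma decomposition_cons U Y t : decomposition U (Y :: t) ->
  [/\ decomposition (union t) t, [disjoint Y & union t], Y :|: union t = U
     & star_split Y (union t)].
Proof.
case=> /= + /andP[dY dt] + indec eqf; rewrite inE negb_or big_cons => /andP[_ t0] eU.
subst U; rewrite -disjoint_union in dY.
have eqt : eq_on (union t) f (bigstar q1 q2 f t) := eq_on_star_r f0 dY eqf.
split=> //.
- by split=> // Z Zt; apply: indec; rewrite inE Zt orbT.
- by move=> A sA; rewrite eqf //; apply: eq_on_star => // B sB; rewrite eqt.
Qed.

Lemma decomposition_block_sub U t X : decomposition U t -> X \subset U ->
  indecomposable q1 q2 X f -> exists2 Y, Y \in t & X \subset Y.
Proof.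
elim: t U => [|Y t IH] U dect sXU indX.
  case: dect => _ _ eU _ _; case: indX => X0 _; move: X0 sXU.
  by rewrite -eU big_nil subset0 => /negPf ->.
have [dect' dYt eU sp] := decomposition_cons dect.
have sXYt : X \subset Y :|: union t by rewrite eU.
have dX : [disjoint X :&: Y & X :&: union t].
  exact: disjointW (subsetIr X Y) (subsetIr X _) dYt.
have eX : X :&: Y :|: X :&: union t = X by rewrite -setIUr; apply/setIidPl.
have [XY0 | Xt0] := indecomposable_split indX dX eX (star_split_setI sp sXYt).
- have [|Z Zt sXZ] := IH _ dect' _ indX; last by exists Z; rewrite // inE Zt orbT.
  by rewrite -eX XY0 set0U subsetIr.
- by exists Y; rewrite ?mem_head // -eX Xt0 setU0 subsetIr.
Qed.

Lemma decomposition_block_eq U s X Y : decomposition U s ->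
  X \in s -> Y \in s -> X \subset Y -> X = Y.
Proof.
case=> s0 ds _ _ _ Xs Ys sXY; apply/eqP; apply: contraT => neXY.
move/disjoint_setI0: (disjoint_seq_mem ds Xs Ys neXY); rewrite (setIidPl sXY) => X0.
by move: s0; rewrite -X0 Xs.
Qed.

Lemma decomposition_uniq U s : decomposition U s -> uniq s.
Proof. by case=> s0 ds _ _ _; apply: uniq_disjoint_seq. Qed.

Lemma decomposition_mem_eq U s t : decomposition U s -> decomposition U t -> s =i t.
Proof.
have sub s' t' : decomposition U s' -> decomposition U t' -> {subset s' <= t'}.
  move=> decs dect X Xs; have [_ _ us inds _] := decs; have [_ _ ut indt _] := dect.
  have sXU : X \subset U by rewrite -us subset_union.
  have [Y Yt sXY] := decomposition_block_sub dect sXU (inds X Xs).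
  have sYU : Y \subset U by rewrite -ut subset_union.
  have [Z Zs sYZ] := decomposition_block_sub decs sYU (indt Y Yt).
  have eXZ := decomposition_block_eq decs Xs Zs (subset_trans sXY sYZ); subst Z.
  by have -> : X = Y by apply/eqP; rewrite eqEsubset sXY.
by move=> decs dect X; apply/idP/idP; apply: sub.
Qed.

Lemma good_decompP s : good_decomp q1 q2 f s <-> decomposition [set: T] s.
Proof.
split; case=> s0 ds us inds eqf; split=> //.
- by apply/negP => /(nthP set0)[i ltis si0]; move: (s0 i ltis); rewrite si0 eqxx.
- by apply/(pairwiseP set0) => i j ltis ltjs ltij; apply: ds; rewrite // neq_ltn ltij.
- by move=> Z /(nthP set0)[i ltis <-]; apply: inds.
- by move=> i ltis; apply: contraNneq s0 => <-; apply: mem_nth.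
- move/(pairwiseP set0): ds => ds i j ltis ltjs; rewrite neq_ltn => /orP[] ltij.
    exact: ds.
  by rewrite disjoint_sym; apply: ds.
- by move=> i ltis; apply/inds/mem_nth.
Qed.

End Decomposition.

End StarProduct.

Theorem lemma2p7 (q1 q2 : int) (T : finType) (f : {set T} -> int) :
  (0 < #|T|)%N -> f set0 = 0 ->
  exists s : seq {set T},
    good_decomp q1 q2 f s /\
    forall t : seq {set T}, good_decomp q1 q2 f t ->
      size t = size s /\
      exists sigma : {perm 'I_(size s)},
        forall i : 'I_(size s), nth set0 t i = nth set0 s (sigma i).
Proof.
move=> _ f0.
have [s decs] := decomposition_exists q1 q2 f0 [set: T].
exists s; split=> [|t /good_decompP dect]; first exact/good_decompP.
have pts : perm_eq t s.
  exact: uniq_perm (decomposition_uniq dect) (decomposition_uniq decs)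
                   (decomposition_mem_eq f0 dect decs).
split; first exact: perm_size pts.
have /tuple_permP[p ->] : perm_eq t (in_tuple s) by [].
by exists p => i; rewrite -(tnth_nth set0) tnth_mktuple (tnth_nth set0).
Qed.
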